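(* Let $\mathcal D$ be a complete, cocomplete, extremally co-well-powered (extremal epi, mono) category. Let $\{(d_i,F_i)\}_{i\in I}$ be a class of objects of $\mathcal Q(\mathcal D)$ and $(d,(f_i\colon d\to d_i)_{i\in I})$ a source in $\mathcal D$. Then there is a reduced projective filtration $F'$ on $d$ such that (1) each $f_i$ is a morphism $(d,F')\to(d_i,F_i)$ of $\mathcal Q(\mathcal D)$, and (2) for every object $(d'',F'')$ of $\mathcal Q(\mathcal D)$ and morphism $h\colon d''\to d$, $h$ is a morphism $(d'',F'')\to(d,F')$ of $\mathcal Q(\mathcal D)$ if and only if each $f_ih$ is a morphism $(d'',F'')\to(d_i,F_i)$ of $\mathcal Q(\mathcal D)$.
   Context: For a category $\mathcal D$ and an object $d$, $M(d)$ denotes the class of all morphisms with source $d$, quasi-ordered by $\phi_1\ge\phi_2$ iff there is $h$ with $h\phi_1=\phi_2$. A projective filtration on $d$ is a non-empty, directed, saturated subclass $F\subseteq M(d)$ (saturated: $\phi_1\in F$, $\phi_1\ge\phi_2$ imply $\phi_2\in F$). A subclass $S\subseteq F$ is initial if every $\phi\in F$ satisfies $\phi\le\psi$ for some $\psi\in S$. For $f\colon d'\to d$, $f^*(F)=\{\phi f:\phi\in F\}$. $\mathcal P(\mathcal D)$ has objects $(d,F)$, and morphisms $(d_1,F_1)\to(d_2,F_2)$ the morphisms $f\colon d_1\to d_2$ of $\mathcal D$ with $f^*(F_2)\subseteq F_1$. $F$ is reduced if it has an initial subclass of extremal epimorphisms; $\mathcal Q(\mathcal D)$ is the full subcategory of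 $\mathcal P(\mathcal D)$ of reduced filtered objects. *)

(* Universe polymorphism is used so that "small" (index categories, sets of
   quotients) can be expressed relative to the universe of the category. *)
Set Universe Polymorphism.
Set Implicit Arguments.

Record Category@{o h} := {
  Ob :> Type@{o};
  Hom : Ob -> Ob -> Type@{h};
  comp : forall a b c : Ob, Hom b c -> Hom a b -> Hom a c;
  idm : forall a : Ob, Hom a a;
  comp_assoc : forall a b c e (f : Hom a b) (g : Hom b c) (k : Hom c e),
      comp k (comp g f) = comp (comp k g) f;
  comp_id_l : forall a b (f : Hom a b), comp (idm b) f = f;
  comp_id_r : forall a b (f : Hom a b), comp f (idm a) = f
}.
Arguments Hom {C} : rename.
Arguments comp {C a b c} : rename.
Arguments idm {C} : rename.

Notation "g ∘ f" := (comp g f) (at level 40, left associativity).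

Record Functor@{so sh o h} (J : Category@{so sh}) (C : Category@{o h}) := {
  fobj :> Ob J -> Ob C;
  fmap : forall a b : Ob J, Hom a b -> Hom (fobj a) (fobj b);
  fmap_id : forall a, fmap a a (idm a) = idm (fobj a);
  fmap_comp : forall a b c (f : Hom a b) (g : Hom b c),
      fmap a c (g ∘ f) = fmap b c g ∘ fmap a b f
}.
Arguments fmap {J C} F {a b} : rename.

Definition is_cone {J C : Category} (F : Functor J C) (c : Ob C)
  (leg : forall j : Ob J, Hom c (F j)) : Prop :=
  forall (j k : Ob J) (u : Hom j k), fmap F u ∘ leg j = leg k.

Definition is_limit {J C : Category} (F : Functor J C) (L : Ob C)
  (leg : forall j : Ob J, Hom L (F j)) : Prop :=
  is_cone F L leg /\
  forall (c : Ob C) (leg' : forall j : Ob J, Hom c (F j)),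
    is_cone F c leg' ->
    exists m : Hom c L, (forall j, leg j ∘ m = leg' j) /\
      forall m' : Hom c L, (forall j, leg j ∘ m' = leg' j) -> m' = m.

Definition is_cocone {J C : Category} (F : Functor J C) (c : Ob C)
  (leg : forall j : Ob J, Hom (F j) c) : Prop :=
  forall (j k : Ob J) (u : Hom j k), leg k ∘ fmap F u = leg j.

Definition is_colimit {J C : Category} (F : Functor J C) (L : Ob C)
  (leg : forall j : Ob J, Hom (F j) L) : Prop :=
  is_cocone F L leg /\
  forall (c : Ob C) (leg' : forall j : Ob J, Hom (F j) c),
    is_cocone F c leg' ->
    exists m : Hom L c, (forall j, m ∘ leg j = leg' j) /\
      forall m' : Hom L c, (forall j, m' ∘ leg j = leg' j) -> m' = m.

(* complete / cocomplete: all limits / colimits of diagrams indexed by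
   small categories (objects and morphisms in the universe s < o). *)
Definition complete@{o h s | s < o} (C : Category@{o h}) : Prop :=
  forall (J : Category@{s s}) (F : Functor J C),
    exists (L : Ob C) (leg : forall j, Hom L (F j)), is_limit F L leg.

Definition cocomplete@{o h s | s < o} (C : Category@{o h}) : Prop :=
  forall (J : Category@{s s}) (F : Functor J C),
    exists (L : Ob C) (leg : forall j, Hom (F j) L), is_colimit F L leg.

Definition is_mono {C : Category} {a b : Ob C} (m : Hom a b) : Prop :=
  forall (x : Ob C) (g h : Hom x a), m ∘ g = m ∘ h -> g = h.

Definition is_epi {C : Category} {a b : Ob C} (e : Hom a b) : Prop :=
  forall (x : Ob C) (g h : Hom b x), g ∘ e = h ∘ e -> g = h.

Definition is_iso {C : Category} {a b : Ob C} (f : Hom a b) : Prop :=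
  exists g : Hom b a, g ∘ f = idm a /\ f ∘ g = idm b.

Definition is_extremal_epi {C : Category} {a b : Ob C} (e : Hom a b) : Prop :=
  is_epi e /\
  forall (x : Ob C) (g : Hom a x) (m : Hom x b), is_mono m -> m ∘ g = e -> is_iso m.

(* (ExtrEpi, Mono)-category in the sense of Adamek-Herrlich-Strecker:
   every morphism has an (extremal epi, mono)-factorization, and the unique
   (ExtrEpi, Mono)-diagonalization property holds.  (Both classes are
   automatically closed under composition with isomorphisms.) *)
Definition extrepi_mono_category (C : Category) : Prop :=
  (forall (a b : Ob C) (f : Hom a b),
      exists (x : Ob C) (e : Hom a x) (m : Hom x b),
        is_extremal_epi e /\ is_mono m /\ m ∘ e = f) /\
  (forall (a b c e0 : Ob C) (e : Hom a b) (m : Hom c e0) (u : Hom a c) (v : Hom b e0),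
      is_extremal_epi e -> is_mono m -> v ∘ e = m ∘ u ->
      exists dg : Hom b c, dg ∘ e = u /\ m ∘ dg = v /\
        forall dg' : Hom b c, dg' ∘ e = u -> m ∘ dg' = v -> dg' = dg).

(* extremally co-well-powered: for each object d, the extremal quotients of
   d form (up to isomorphism under d) a set, i.e. are indexed by a small type *)
Definition extremally_co_well_powered@{o h s | s < o} (C : Category@{o h}) : Prop :=
  forall d : Ob C,
    exists (Q : Type@{s}) (qo : Q -> Ob C) (q : forall t : Q, Hom d (qo t)),
      (forall t, is_extremal_epi (q t)) /\
      forall (c : Ob C) (e : Hom d c), is_extremal_epi e ->
        exists (t : Q) (k : Hom (qo t) c), is_iso k /\ k ∘ q t = e.

Definition mclass {C : Category} (d : Ob C) : Type :=
  forall c : Ob C, Hom d c -> Prop.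

Definition mge {C : Category} {d c1 c2 : Ob C} (phi1 : Hom d c1) (phi2 : Hom d c2) : Prop :=
  exists h : Hom c1 c2, h ∘ phi1 = phi2.

Definition is_proj_filtration {C : Category} (d : Ob C) (F : mclass d) : Prop :=
  (exists (c : Ob C) (phi : Hom d c), F c phi) /\
  (forall c1 (phi1 : Hom d c1) c2 (phi2 : Hom d c2), F c1 phi1 -> F c2 phi2 ->
     exists c3 (psi : Hom d c3), F c3 psi /\ mge psi phi1 /\ mge psi phi2) /\
  (forall c1 (phi1 : Hom d c1) c2 (phi2 : Hom d c2), F c1 phi1 -> mge phi1 phi2 -> F c2 phi2).

Arguments is_proj_filtration {C} d F.

Definition is_initial {C : Category} {d : Ob C} (S F : mclass d) : Prop :=
  (forall c (phi : Hom d c), S c phi -> F c phi) /\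
  (forall c (phi : Hom d c), F c phi -> exists c' (psi : Hom d c'), S c' psi /\ mge psi phi).

Definition is_reduced {C : Category} {d : Ob C} (F : mclass d) : Prop :=
  exists S : mclass d, is_initial S F /\
    forall c (phi : Hom d c), S c phi -> is_extremal_epi phi.

Definition Q_object {C : Category} (d : Ob C) (F : mclass d) : Prop :=
  is_proj_filtration d F /\ is_reduced F.

Arguments Q_object {C} d F.

Definition P_morphism {C : Category} {d1 d2 : Ob C} (F1 : mclass d1) (F2 : mclass d2)
  (f : Hom d1 d2) : Prop :=
  forall c (phi : Hom d2 c), F2 c phi -> F1 c (phi ∘ f).

Definition Q_morphism {C : Category} {d1 d2 : Ob C} (F1 : mclass d1) (F2 : mclass d2)
  (f : Hom d1 d2) : Prop :=
  Q_object d1 F1 /\ Q_object d2 F2 /\ P_morphism F1 F2 f.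

(* Given the source (f_i : d -> d_i), call a pair (F'', h : d'' -> d) with
   (d'',F'') in Q(D) a *test* if every f_i ∘ h is a Q(D)-morphism into
   (d_i,F_i).  The candidate filtration on d is the class F' of all phi such
   that phi ∘ h ∈ F'' for every test (F'',h); it is the largest class making
   each test h a P(D)-morphism, which gives the universal property (2) at once.

   The work lies in showing that such a "pullback" class is a reduced
   projective filtration:
   - it is non-empty because it contains the map to a terminal object,
   - it is directed because it is closed under pairing into binary products,
   - it is saturated because every test filtration is,
   - it is reduced because the extremal-epi part of the (ExtrEpi, Mono)
     factorization of a member is again a member, by diagonalization against
     the extremal epis that are initial in each test filtration.
   Terminal objects and binary products are obtained from completeness as
   limits of the empty and the discrete two-object diagram. *)
From Stdlib Require Import Eqdep_dec Bool.

Set Universe Polymorphism.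

Definition is_terminal {C : Category} (t : Ob C) : Prop :=
  forall c : Ob C, exists u : Hom c t, forall u' : Hom c t, u' = u.

Definition is_binary_product {C : Category} {c1 c2 p : Ob C}
  (p1 : Hom p c1) (p2 : Hom p c2) : Prop :=
  (forall x (a : Hom x c1) (b : Hom x c2), exists m, p1 ∘ m = a /\ p2 ∘ m = b) /\
  (forall x (m m' : Hom x p), p1 ∘ m = p1 ∘ m' -> p2 ∘ m = p2 ∘ m' -> m = m').

Definition BoolCat@{s} : Category@{s s}.
Proof.
  refine {| Ob := bool; Hom := fun a b => a = b;
            comp := fun a b c g f => eq_trans f g; idm := fun a => eq_refl |}.
  all: intros; apply UIP_dec, bool_dec.
Defined.

Definition PairF@{s o h} (D : Category@{o h}) (c1 c2 : Ob D) :
  Functor@{s s o h} BoolCat@{s} D.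
Proof.
  refine {| fobj := fun b : Ob BoolCat@{s} => if b then c1 else c2;
            fmap := fun a b (u : @Hom BoolCat@{s} a b) =>
              match u in _ = b' return Hom (if a then c1 else c2) (if b' then c1 else c2)
              with eq_refl => idm _ end |}.
  - reflexivity.
  - intros a b c u v. destruct u, v. symmetry. apply comp_id_l.
Defined.

Lemma complete_binary_products@{o h s | s < o +} (D : Category@{o h})
  (Hc : complete@{o h s} D) (c1 c2 : Ob D) :
  exists (p : Ob D) (p1 : Hom p c1) (p2 : Hom p c2), is_binary_product p1 p2.
Proof.
  destruct (Hc BoolCat@{s} (PairF@{s o h} D c1 c2)) as [L [leg [Hcone Hu]]].
  exists L, (leg true), (leg false). split.
  - intros x a b.
    destruct (Hu x (fun j => match j return Hom x (PairF D c1 c2 j) with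
                             | true => a | false => b end)) as [m [Hm _]].
    + intros j k u. destruct u. destruct j; apply comp_id_l.
    + exists m. split; [apply (Hm true) | apply (Hm false)].
  - intros x m m' E1 E2.
    destruct (Hu x (fun j => leg j ∘ m)) as [m0 [_ Hun]].
    + intros j k u. rewrite comp_assoc, (Hcone j k u). reflexivity.
    + rewrite (Hun m) by (intros; reflexivity).
      symmetry. apply Hun. intros [|]; symmetry; assumption.
Qed.

Definition EmptyCat@{s} : Category@{s s}.
Proof.
  refine {| Ob := Empty_set; Hom := fun a b => Empty_set;
            comp := fun a b c g f => f; idm := fun a => match a with end |}.
  all: intros; destruct a.
Defined.

Definition EmptyF@{s o h} (D : Category@{o h}) : Functor@{s s o h} EmptyCat@{s} D.
Proof.
  refine {| fobj := fun e : Ob EmptyCat@{s} => match e with end;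
            fmap := fun a b u => match a with end |}.
  all: intros; destruct a.
Defined.

Lemma complete_terminal@{o h s | s < o +} (D : Category@{o h})
  (Hc : complete@{o h s} D) : exists t : Ob D, is_terminal t.
Proof.
  destruct (Hc EmptyCat@{s} (EmptyF@{s o h} D)) as [L [leg [_ Hu]]].
  exists L. intros c.
  destruct (Hu c (fun j => match j with end)) as [m [_ Hm]].
  - intros j. destruct j.
  - exists m. intros u'. apply Hm. intros j; destruct j.
Qed.

Lemma P_morphism_comp {C : Category} {d1 d2 d3 : Ob C}
  {F1 : mclass d1} {F2 : mclass d2} {F3 : mclass d3} {g : Hom d1 d2} {f : Hom d2 d3} :
  P_morphism F1 F2 g -> P_morphism F2 F3 f -> P_morphism F1 F3 (f ∘ g).
Proof.
  intros Hg Hf c phi Hphi. rewrite comp_assoc. apply Hg, Hf, Hphi.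
Qed.

Section PullbackFiltration.
Variables (C : Category) (d : Ob C).

Variable T : forall d'' : Ob C, mclass d'' -> Hom d'' d -> Prop.

Definition pullback_class : mclass d :=
  fun c phi => forall d'' F'' h, T d'' F'' h -> F'' c (phi ∘ h).

Lemma pullback_class_P_morphism d'' (F'' : mclass d'') (h : Hom d'' d) :
  T d'' F'' h -> P_morphism F'' pullback_class h.
Proof. intros HT c phi Hphi. exact (Hphi d'' F'' h HT). Qed.

Hypothesis tests_filtered :
  forall d'' F'' h, T d'' F'' h -> is_proj_filtration d'' F''.

Lemma pullback_class_saturated c1 (phi1 : Hom d c1) c2 (phi2 : Hom d c2) :
  pullback_class c1 phi1 -> mge phi1 phi2 -> pullback_class c2 phi2.
Proof.
  intros H1 [k Ek] d'' F'' h HT.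
  destruct (tests_filtered _ _ _ HT) as [_ [_ Hsat]].
  apply (Hsat _ _ _ _ (H1 d'' F'' h HT)).
  exists k. rewrite comp_assoc, Ek. reflexivity.
Qed.

(* Non-emptiness: the map to a terminal object lies in every filtration
   (it factors through any member), hence in the pullback class. *)
Lemma pullback_class_terminal (t : Ob C) (Ht : is_terminal t) :
  exists c (phi : Hom d c), pullback_class c phi.
Proof.
  destruct (Ht d) as [ud _]. exists t, ud.
  intros d'' F'' h HT.
  destruct (tests_filtered _ _ _ HT) as [[c0 [phi0 H0]] [_ Hsat]].
  apply (Hsat _ phi0); [exact H0|].
  destruct (Ht c0) as [u0 _]. exists u0.
  destruct (Ht d'') as [u1 Hu1]. rewrite (Hu1 (u0 ∘ phi0)), (Hu1 (ud ∘ h)). reflexivity.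
Qed.

(* Directedness: the pairing <phi1, phi2> into a product dominates both and
   stays in the class, since in each test filtration it is dominated by a
   common upper bound of phi1 ∘ h and phi2 ∘ h. *)
Lemma pullback_class_directed
  (Hprod : forall c1 c2 : Ob C, exists (p : Ob C) (p1 : Hom p c1) (p2 : Hom p c2),
             is_binary_product p1 p2)
  c1 (phi1 : Hom d c1) c2 (phi2 : Hom d c2) :
  pullback_class c1 phi1 -> pullback_class c2 phi2 ->
  exists c3 (psi : Hom d c3), pullback_class c3 psi /\ mge psi phi1 /\ mge psi phi2.
Proof.
  intros H1 H2.
  destruct (Hprod c1 c2) as [p [p1 [p2 [Hpair Hjoint]]]].
  destruct (Hpair d phi1 phi2) as [psi [E1 E2]].
  exists p, psi. split; [|split; [exists p1; exact E1 | exists p2; exact E2]].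
  intros d'' F'' h HT.
  destruct (tests_filtered _ _ _ HT) as [_ [Hdir Hsat]].
  destruct (Hdir _ _ _ _ (H1 d'' F'' h HT) (H2 d'' F'' h HT))
    as [c3 [chi [Hchi [[a Ea] [b Eb]]]]].
  destruct (Hpair c3 a b) as [m [M1 M2]].
  apply (Hsat _ chi _ _ Hchi). exists m.
  apply Hjoint.
  - rewrite comp_assoc, M1, Ea, comp_assoc, E1. reflexivity.
  - rewrite comp_assoc, M2, Eb, comp_assoc, E2. reflexivity.
Qed.

(* Reducedness: factor a member phi = m ∘ e (extremal epi, mono).  In a
   reduced test filtration, phi ∘ h is dominated by an extremal epi chi with
   k ∘ chi = m ∘ (e ∘ h); the diagonal of this square shows chi >= e ∘ h,
   so e is a member, and e >= phi. *)
Lemma pullback_class_reduced (HEM : extrepi_mono_category C) :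
  (forall d'' F'' h, T d'' F'' h -> is_reduced F'') -> is_reduced pullback_class.
Proof.
  intros Hred. destruct HEM as [Hfact Hdiag].
  exists (fun c phi => pullback_class c phi /\ is_extremal_epi phi).
  split; [split|].
  - intros c phi [H _]; exact H.
  - intros c phi Hphi.
    destruct (Hfact _ _ phi) as [x [e [m [He [Hmono Eme]]]]].
    exists x, e. split; [split; [|exact He] | exists m; exact Eme].
    intros d'' F'' h HT.
    destruct (tests_filtered _ _ _ HT) as [_ [_ Hsat]].
    destruct (Hred _ _ _ HT) as [S [[HSF HSi] HSe]].
    destruct (HSi _ _ (Hphi d'' F'' h HT)) as [c' [chi [Schi [k Ek]]]].
    destruct (Hdiag _ _ _ _ chi m (e ∘ h) k (HSe _ _ Schi) Hmono) as [dg [Edg _]].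
    { rewrite Ek, <- Eme, comp_assoc. reflexivity. }
    apply (Hsat _ chi); [exact (HSF _ _ Schi) | exists dg; exact Edg].
  - intros c phi [_ H]; exact H.
Qed.

Lemma pullback_class_Q_object (HEM : extrepi_mono_category C)
  (t : Ob C) (Ht : is_terminal t)
  (Hprod : forall c1 c2 : Ob C, exists (p : Ob C) (p1 : Hom p c1) (p2 : Hom p c2),
             is_binary_product p1 p2) :
  (forall d'' F'' h, T d'' F'' h -> is_reduced F'') -> Q_object d pullback_class.
Proof.
  intros Hred. split; [split; [|split] | exact (pullback_class_reduced HEM Hred)].
  - exact (pullback_class_terminal t Ht).
  - exact (pullback_class_directed Hprod).
  - exact pullback_class_saturated.
Qed.

End PullbackFiltration.

Arguments pullback_class {C d} T.
Arguments pullback_class_P_morphism {C d T d'' F'' h}.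
Arguments pullback_class_Q_object {C d T}.

Definition source_test {D : Category} {I : Type} {di : I -> Ob D}
  (Fi : forall i : I, mclass (di i)) {d : Ob D} (f : forall i : I, Hom d (di i))
  (d'' : Ob D) (F'' : mclass d'') (h : Hom d'' d) : Prop :=
  Q_object d'' F'' /\ forall i : I, Q_morphism F'' (Fi i) (f i ∘ h).

Lemma source_leg_P_morphism {D : Category} {I : Type} {di : I -> Ob D}
  (Fi : forall i : I, mclass (di i)) {d : Ob D} (f : forall i : I, Hom d (di i))
  (i : I) : P_morphism (pullback_class (source_test Fi f)) (Fi i) (f i).
Proof.
  intros c psi Hpsi d'' F'' h [_ Hm].
  rewrite <- comp_assoc. destruct (Hm i) as [_ [_ Hmi]]. exact (Hmi c psi Hpsi).
Qed.

#[universes(polymorphic)]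
Theorem mainTheorem7@{o h s i +| s < o +} (D : Category@{o h})
  (Hcomp : complete@{o h s} D) (Hcocomp : cocomplete@{o h s} D)
  (Hcwp : extremally_co_well_powered@{o h s} D)
  (HEM : extrepi_mono_category D)
  (I : Type@{i}) (di : I -> Ob D) (Fi : forall i : I, mclass (di i))
  (HFi : forall i : I, Q_object (di i) (Fi i))
  (d : Ob D) (f : forall i : I, Hom d (di i)) :
  exists F' : mclass d,
    Q_object d F' /\
    (forall i : I, Q_morphism F' (Fi i) (f i)) /\
    (forall (d'' : Ob D) (F'' : mclass d''), Q_object d'' F'' ->
       forall h : Hom d'' d,
         Q_morphism F'' F' h <-> (forall i : I, Q_morphism F'' (Fi i) (f i ∘ h))).
Proof.
  destruct (complete_terminal@{o h s} D Hcomp) as [t Ht].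
  pose proof (complete_binary_products@{o h s} D Hcomp) as Hprod.
  assert (QF : Q_object d (pullback_class (source_test Fi f))).
  { apply (pullback_class_Q_object (fun _ _ _ HT => proj1 (proj1 HT)) HEM t Ht Hprod).
    intros d'' F'' h [[_ Hred] _]. exact Hred. }
  assert (Hlegs : forall i, Q_morphism (pullback_class (source_test Fi f)) (Fi i) (f i)).
  { intros i. exact (conj QF (conj (HFi i) (source_leg_P_morphism Fi f i))). }
  exists (pullback_class (source_test Fi f)).
  split; [exact QF | split; [exact Hlegs |]].
  intros d'' F'' HQ h. split.
  - intros [_ [_ Hh]] i.
    destruct (Hlegs i) as [_ [_ Hfi]].
    exact (conj HQ (conj (HFi i) (P_morphism_comp Hh Hfi))).
  - intros Hm. split; [exact HQ | split; [exact QF |]].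
    exact (pullback_class_P_morphism (conj HQ Hm)).
Qed.
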